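(* For all integers $d\ge 3$ and $0\le j\le \left\lfloor \frac{3(d-1)}{2}\right\rfloor$, $$\operatorname{sign}(d,j)=\operatorname{triv}(d-2,j-3).$$
   Context: $\Bbbk$ is an algebraically closed field of characteristic $0$. For an integer $d\ge 1$, $A(d)=\Bbbk[x_1,x_2,x_3]/(x_1^d,x_2^d,x_3^d)=\bigoplus_j A(d)_j$ with its standard grading, where $A(d)_j=0$ for $j<0$ (so $A(1)=\Bbbk$ in degree $0$). $S_3$ acts on $A(d)$ by permuting variables. The linear map $E:A(d)_{j+1}\to A(d)_j$ is defined on the monomial basis by $E(x_1^{a_1}x_2^{a_2}x_3^{a_3})=\sum_{k=1}^{3} a_k(d-a_k)\,x_1^{a_1}\cdots x_k^{a_k-1}\cdots x_3^{a_3}$; it commutes with the $S_3$-action. $\operatorname{triv}(d,j)$ and $\operatorname{sign}(d,j)$ denote the multiplicities of the trivial and sign representations of $S_3$ in $\operatorname{Ker}(E)\cap A(d)_j$ (zero when $j<0$). *)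

From HB Require Import structures.
From mathcomp Require Import all_boot all_order all_algebra all_fingroup.
Set Implicit Arguments. Unset Strict Implicit. Unset Printing Implicit Defensive.
Import GRing.Theory Num.Theory.
Local Open Scope ring_scope.

(* Monomials x1^a1 x2^a2 x3^a3 of A(d) = k[x1,x2,x3]/(x1^d,x2^d,x3^d):
   exponent vectors a : 'I_3 -> 'I_d (i.e. 0 <= a_k < d).  These form a
   basis of A(d); A(d) is modelled as row vectors of length #|Mon d|,
   coordinates indexed via enum_val. *)
Definition Mon (d : nat) := {ffun 'I_3 -> 'I_d}.
Definition N (d : nat) : nat := #|{ffun 'I_3 -> 'I_d}|.
Definition mon (d : nat) (i : 'I_(N d)) : Mon d := enum_val i.
Definition deg (d : nat) (m : Mon d) : nat := (\sum_(k < 3) (m k : nat))%N.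

(* S_3 acts by permuting variables: s . x_t = x_(s t), so the exponent of
   x_u in s . m is the exponent of x_(s^-1 u) in m. *)
Definition act (d : nat) (m : Mon d) (s : 'S_3) : Mon d := [ffun u => m ((s^-1)%g u)].

Section Mats.
Variable F : fieldType.

(* Matrix of E (row-vector convention: v *m Emx = E v).
   E(x^a) = sum_k a_k (d - a_k) x^(a - e_k). *)
Definition Emx (d : nat) : 'M[F]_(N d) :=
  \matrix_(i, l) \sum_(k < 3)
     (if (0 < (mon i k : nat))%N &&
         [forall t : 'I_3, (mon l t : nat) ==
                            (if t == k then (mon i t).-1 else mon i t)]
      then (((mon i k : nat) * (d - mon i k))%N)%:R else 0).

Definition Pmx (d : nat) (s : 'S_3) : 'M[F]_(N d) :=
  \matrix_(i, l) ((mon l == act (mon i) s) : nat)%:R.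

(* Projection-like diagonal matrix whose row space is A(d)_j
   (zero when j < 0). *)
Definition Dmx (d : nat) (j : int) : 'M[F]_(N d) :=
  diag_mx (\row_i (((deg (mon i))%:Z == j) : nat)%:R).

Definition KerEj (d : nat) (j : int) : 'M[F]_(N d) :=
  (Dmx d j :&: kermx (Emx d))%MS.

Definition isotypic (d : nat) (chi : 'S_3 -> F) : 'M[F]_(N d) :=
  (\bigcap_(s : 'S_3) kermx (Pmx d s - (chi s)%:M))%MS.

Definition sgnF (s : 'S_3) : F := (-1) ^+ (odd_perm s).

(* Multiplicity of a 1-dim irreducible = dim Hom_{S3}(chi, V) = dim of the
   chi-isotypic subspace of V. *)
Definition triv (d : nat) (j : int) : nat :=
  \rank (KerEj d j :&: isotypic d (fun _ => 1))%MS.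
Definition sign (d : nat) (j : int) : nat :=
  \rank (KerEj d j :&: isotypic d sgnF)%MS.

End Mats.

(* The lowering operator E is part of an sl2-triple (E, L, H) on A(d), where
   L is multiplication by x_1 + x_2 + x_3 and H acts on A(d)_i by the scalar
   3(d-1) - 2i.  As in the representation theory of sl2, H being a positive
   integer in degrees below the middle (and char 0) makes
   E : A(d)_j -> A(d)_(j-1) surjective for j <= 3(d-1)/2; since E and L
   commute with S_3 this holds on every isotypic part, so the multiplicity of
   a character in Ker(E) ∩ A(d)_j is the difference of its multiplicities in
   A(d)_j and A(d)_(j-1).  It remains to compare those multiplicities:
   a sign-isotypic vector of A(d) is determined by its coefficients on
   strictly decreasing exponents, an invariant vector of A(d-2) by those on
   weakly decreasing ones, and a |-> a - (2,1,0) is a degree -3 bijection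
   between the two, i.e. division by x_1^2 x_2. *)

From Pilot Require Import Defs.
From HB Require Import structures.
From mathcomp Require Import all_boot all_order all_algebra all_fingroup zify.
Import GRing.Theory.
Set Implicit Arguments. Unset Strict Implicit. Unset Printing Implicit Defensive.
Local Open Scope ring_scope.

Local Notation act := Defs.act.

Lemma submx_mul_intertwine (F : fieldType) m n p q r (W : 'M[F]_(m, n))
    (A : 'M_(p, n)) (M : 'M_(n, q)) (N : 'M_(p, r)) (B : 'M_(r, q)) :
  (W <= A)%MS -> A *m M = N *m B -> (W *m M <= B)%MS.
Proof. by case/submxP=> X -> AM; rewrite -mulmxA AM mulmxA submxMl. Qed.

Lemma bigcap_kermx_mul_stable (F : fieldType) (I : finType) m n
    (P : I -> 'M[F]_n) (M : 'M_n) (W : 'M_(m, n)) :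
  (forall s, P s *m M = M *m P s) ->
  (W <= \bigcap_s kermx (P s))%MS -> (W *m M <= \bigcap_s kermx (P s))%MS.
Proof.
move=> PM /sub_bigcapmxP W_P; apply/sub_bigcapmxP=> s _; apply/sub_kermxP.
by rewrite -mulmxA -PM mulmxA (sub_kermxP (W_P s isT)) mul0mx.
Qed.

Lemma pchar0_natr_neq0 (F : fieldType) p :
  [pchar F] =i pred0 -> (0 < p)%N -> p%:R != 0 :> F.
Proof. by move/pcharf0P=> ->; rewrite -lt0n. Qed.

Lemma mxrank_leq_inj (F : fieldType) m n p q (U : 'M[F]_(m, n)) (M : 'M_(n, p))
    (W : 'M_(q, p)) :
  (U *m M <= W)%MS ->
  (forall r (X : 'M_(r, n)), (X <= U)%MS -> X *m M = 0 -> X = 0) ->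
  (\rank U <= \rank W)%N.
Proof.
move=> UM_W M_inj; rewrite -(mxrank_mul_ker U M).
rewrite (M_inj _ (U :&: kermx M)%MS) ?capmxSl ?mxrank0 ?addn0 ?mxrankS //.
exact/sub_kermxP/capmxSr.
Qed.

Lemma sum_indicator (F : fieldType) (T : finType) (q : T) (b : bool) (G X : T -> F) :
  (forall p, X p = (b && (p == q))%:R * G p) -> \sum_p X p = b%:R * G q.
Proof.
move=> XE; rewrite (eq_bigr _ (fun p _ => XE p)) (bigD1 q) //= eqxx andbT.
by rewrite big1 ?addr0 // => p /negbTE->; rewrite andbF mul0r.
Qed.

Lemma sum_indicator1 (F : fieldType) (T : finType) (q : T) (G X : T -> F) :
  (forall p, X p = (p == q)%:R * G p) -> \sum_p X p = G q.
Proof. by move=> XE; rewrite (@sum_indicator _ _ q true G) ?mul1r. Qed.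

(** * Lowering operators of sl2-triples on graded spaces *)

Section MxprodXsubC.
Variables (F : fieldType) (n : nat).
Implicit Types A B D : 'M[F]_n.

Fixpoint mxprod_XsubC (rs : seq F) A : 'M[F]_n :=
  if rs is c :: rs' then (A - c%:M) *m mxprod_XsubC rs' A else 1%:M.

Lemma mxprod_XsubC_intertwine D A B rs :
  D *m A = B *m D -> D *m mxprod_XsubC rs A = mxprod_XsubC rs B *m D.
Proof.
move=> DA; elim: rs => [|c rs IH] /=; first by rewrite mulmx1 mul1mx.
by rewrite mulmxA mulmxBr DA mul_mx_scalar -mul_scalar_mx -mulmxBl -!mulmxA IH.
Qed.

Lemma mxprod_XsubC_shift rs h A :
  mxprod_XsubC [seq c + h | c <- rs] A = mxprod_XsubC rs (A - h%:M).
Proof.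
elim: rs => [|c rs IH] //=.
by rewrite IH (raddfD _ c h) opprD addrA addrAC.
Qed.

(* Since no root vanishes, the constant term of the product is invertible, so
   [w] is recovered from [w *m A] by a polynomial in [A]. *)
Lemma mxprod_XsubC_annihilator_inv rs A m (w : 'M[F]_(m, n)) :
  all (fun c => c != 0) rs -> w *m mxprod_XsubC rs A = 0 ->
  exists R, w = w *m A *m R /\ (forall B, B *m A = A *m B -> B *m R = R *m B).
Proof.
elim: rs w => [|c rs IH] w /=.
  move=> _; rewrite mulmx1 => ->; exists 0; split; first by rewrite mulmx0.
  by move=> B _; rewrite mulmx0 mul0mx.
case/andP=> c0 /IH{}IH; rewrite mulmxA => /IH [R [wR RC]].
set X := A - c%:M.
have XC B : B *m A = A *m B -> B *m X = X *m B.
  by move=> BA; rewrite /X mulmxBr mulmxBl BA scalar_mxC.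
exists (c^-1 *: (1%:M - X *m R)); split.
  rewrite -scalemxAr mulmxBr mulmx1 !mulmxA -(mulmxA w A X) XC // mulmxA -wR.
  by rewrite /X mulmxBr mul_mx_scalar opprB addrC subrK scalerA mulVf // scale1r.
move=> B BA; rewrite -scalemxAr -scalemxAl; congr (_ *: _).
clearbody X; rewrite mulmxBr mulmxBl mulmx1 mul1mx mulmxA XC //.
by rewrite -!mulmxA RC // (mulmxA X).
Qed.

End MxprodXsubC.

Section GradedLowering.
Variables (F : fieldType) (n : nat) (E L : 'M[F]_n) (D : int -> 'M[F]_n).
Variables (I : finType) (P : I -> 'M[F]_n) (h : nat -> nat) (j : nat).

Hypothesis D_E : forall i, D i *m E = E *m D (i - 1).
Hypothesis D_L : forall i, D i *m L = L *m D (i + 1).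
Hypothesis D_neg1 : D (-1) = 0.
Hypothesis D_LE : forall i : nat, (i < j)%N ->
  D i *m (L *m E) = (E *m L + (h i)%:R%:M) *m D i.
Hypothesis h_pos : forall i, (i < j)%N -> (0 < h i)%N.
Hypothesis F_pchar0 : [pchar F] =i pred0.
Hypothesis P_E : forall s, P s *m E = E *m P s.
Hypothesis P_L : forall s, P s *m L = L *m P s.

Local Notation V := (\bigcap_s kermx (P s))%MS.

Fixpoint sl2_roots (i : nat) : seq F :=
  if i is i'.+1 then (h i')%:R :: [seq c + (h i')%:R | c <- sl2_roots i']
  else [::].

Lemma D_mul_LE i : D i *m (L *m E) = (L *m E) *m D i.
Proof. by rewrite mulmxA D_L -mulmxA D_E addrK mulmxA. Qed.

Lemma sl2_roots_annihilate i : (i <= j)%N ->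
  D (i%:Z - 1) *m mxprod_XsubC (sl2_roots i) (L *m E) = 0.
Proof.
(* On [D i], [L E = E L + h i], and [L] intertwines [L E] on [D (i - 1)] with
   [E L] on [D i]. *)
elim: i => [|i IH] ij; first by rewrite /= D_neg1 mul0mx.
have -> : i.+1%:Z - 1 = i by rewrite -addn1 PoszD addrK.
rewrite (mxprod_XsubC_intertwine _ (D_LE ij)) /= mxprod_XsubC_shift addrK.
have LEL : L *m (E *m L) = (L *m E) *m L by rewrite mulmxA.
rewrite -(mulmxA E) (mxprod_XsubC_intertwine _ LEL) -!mulmxA.
have -> : L *m D i = D (i%:Z - 1) *m L by rewrite D_L subrK.
rewrite (mulmxA (mxprod_XsubC _ _)) -(mxprod_XsubC_intertwine _ (D_mul_LE _)).
by rewrite IH ?mul0mx ?mulmx0 // ltnW.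
Qed.

Lemma sl2_roots_neq0 : all (fun c => c != 0) (sl2_roots j).
Proof.
suff roots_pos i : (i <= j)%N ->
    forall c, c \in sl2_roots i -> exists2 p, (0 < p)%N & c = p%:R.
  by apply/allP=> c /(roots_pos j (leqnn j)) [p /(pchar0_natr_neq0 F_pchar0) + ->].
elim: i => [|i IH] //= ij c; rewrite inE => /predU1P [->|/mapP [c' c'_root ->]].
  by exists (h i); rewrite ?h_pos.
have [p p_gt0 ->] := IH (ltnW ij) c' c'_root.
by exists (p + h i)%N; rewrite ?addn_gt0 ?p_gt0 ?natrD.
Qed.

Lemma mulE_graded_sub i : ((D i :&: V) *m E <= D (i - 1) :&: V)%MS.
Proof.
rewrite sub_capmx (submx_mul_intertwine (capmxSl _ _) (D_E i)) /=.
exact: bigcap_kermx_mul_stable (capmxSr _ _).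
Qed.

(* [w = w (L E) R] with [R] a polynomial in [L E]; the preimage is [w R L]. *)
Lemma mulE_graded_onto : (D (j%:Z - 1) :&: V <= (D j :&: V) *m E)%MS.
Proof.
set W := (D (j%:Z - 1) :&: V)%MS.
have W_D : (W <= D (j%:Z - 1))%MS := capmxSl _ _.
have W_V : (W <= V)%MS := capmxSr _ _.
have [R [wR RC]] : exists R, W = W *m (L *m E) *m R /\
    (forall B, B *m (L *m E) = (L *m E) *m B -> B *m R = R *m B).
  apply: mxprod_XsubC_annihilator_inv sl2_roots_neq0 _.
  by case/submxP: W_D => X ->; rewrite -mulmxA sl2_roots_annihilate ?mulmx0.
have P_LE s : P s *m (L *m E) = (L *m E) *m P s.
  by rewrite mulmxA P_L -!mulmxA P_E.
have WRL_D : (W *m R *m L <= D j)%MS.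
  have := D_L (j%:Z - 1); rewrite subrK => /(submx_mul_intertwine _)-> //.
  exact: submx_mul_intertwine W_D (RC _ (D_mul_LE _)).
have WRL_V : (W *m R *m L <= V)%MS.
  apply: bigcap_kermx_mul_stable => //.
  by apply: bigcap_kermx_mul_stable W_V => s; apply: RC.
rewrite {1}wR -mulmxA RC // !mulmxA submxMr //.
by rewrite sub_capmx WRL_D.
Qed.

Lemma rank_graded_kerE :
  \rank (D j :&: kermx E :&: V)%MS =
    (\rank (D j :&: V)%MS - \rank (D (j%:Z - 1) :&: V)%MS)%N.
Proof.
have -> : (D j :&: kermx E :&: V = (D j :&: V) :&: kermx E)%MS.
  by rewrite -capmxA (capmxC (kermx E)) capmxA.
have rank_image : \rank ((D j :&: V)%MS *m E) = \rank (D (j%:Z - 1) :&: V)%MS.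
  by apply/eqP; rewrite eqn_leq !mxrankS ?mulE_graded_sub ?mulE_graded_onto.
by rewrite -(mxrank_mul_ker (D j :&: V)%MS E) rank_image addKn.
Qed.

End GradedLowering.

(** * Matrices indexed by monomials *)

Section MonomialAction.
Variable d : nat.
Implicit Types (a b c : Mon d) (s u : 'S_3).

Lemma actE a s t : act a s t = a ((s^-1)%g t).
Proof. by rewrite ffunE. Qed.

Lemma act_perm a s k : act a s (s k) = a k.
Proof. by rewrite actE permK. Qed.

Lemma actM a s u : act (act a s) u = act a (s * u)%g.
Proof. by apply/ffunP=> t; rewrite !actE invMg permM. Qed.

Lemma act1 a : act a 1%g = a.
Proof. by apply/ffunP=> t; rewrite actE invg1 perm1. Qed.

Lemma act_eqV a b s : (b == act a s) = (a == act b (s^-1)%g).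
Proof.
by apply/eqP/eqP=> ->; apply/ffunP=> t; rewrite !actE invgK ?permK ?permKV.
Qed.

Lemma deg_act a s : deg (act a s) = deg a.
Proof.
rewrite /deg (reindex_inj (@perm_inj _ s)) /=.
by apply: eq_bigr => k _; rewrite act_perm.
Qed.

End MonomialAction.

Section MonomialMatrices.
Variable F : fieldType.

Definition mxmon d1 d2 (f : Mon d1 -> Mon d2 -> F) : 'M[F]_(N d1, N d2) :=
  \matrix_(i, l) f (mon i) (mon l).

Definition mon_rank d (a : Mon d) : 'I_(N d) := enum_rank a.

Lemma mon_rankK d : cancel (@mon_rank d) (@mon d).
Proof. exact: enum_rankK. Qed.

Lemma monK d : cancel (@mon d) (@mon_rank d).
Proof. exact: enum_valK. Qed.

Lemma mulmx_mxmonE d1 d2 r (X : 'M[F]_(r, N d1)) (f : Mon d1 -> Mon d2 -> F) i l :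
  (X *m mxmon f) i l = \sum_(p : Mon d1) X i (mon_rank p) * f p (mon l).
Proof.
rewrite mxE (reindex (@mon_rank d1)) /=; last exact/onW_bij/enum_rank_bij.
by apply: eq_bigr => p _; rewrite mxE mon_rankK.
Qed.

Lemma mulmx_mxmon d1 d2 d3 (f : Mon d1 -> Mon d2 -> F) (g : Mon d2 -> Mon d3 -> F) :
  mxmon f *m mxmon g = mxmon (fun a c => \sum_b f a b * g b c).
Proof.
apply/matrixP=> i l; rewrite mulmx_mxmonE mxE.
by apply: eq_bigr => p _; rewrite mxE mon_rankK.
Qed.

Lemma eq_mxmon d1 d2 (f g : Mon d1 -> Mon d2 -> F) : f =2 g -> mxmon f = mxmon g.
Proof. by move=> fg; apply/matrixP=> i l; rewrite !mxE fg. Qed.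

Lemma addmx_mxmon d1 d2 (f g : Mon d1 -> Mon d2 -> F) :
  mxmon f + mxmon g = mxmon (fun a b => f a b + g a b).
Proof. by apply/matrixP=> i l; rewrite !mxE. Qed.

Lemma scalar_mxmon d (c : F) : c%:M = mxmon (fun a b : Mon d => (a == b)%:R * c).
Proof.
apply/matrixP=> i l; rewrite !mxE (inj_eq (can_inj (@monK d))).
by case: (i == l); rewrite ?mul1r ?mul0r.
Qed.

Lemma matrix_mon_rankP d r (X Y : 'M[F]_(r, N d)) :
  (forall i c, X i (mon_rank c) = Y i (mon_rank c)) -> X = Y.
Proof. by move=> XY; apply/matrixP=> i l; rewrite -(monK l) XY. Qed.

Lemma Pmx_mxmon d s : Pmx F d s = mxmon (fun a b => (b == act a s)%:R).
Proof. by apply/matrixP=> i l; rewrite !mxE. Qed.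

Lemma Dmx_mxmon d (j : int) :
  Dmx F d j = mxmon (fun a b => (a == b)%:R * ((deg a)%:Z == j)%:R).
Proof.
apply/matrixP=> i l; rewrite !mxE (inj_eq (can_inj (@monK d))).
by case: (i =P l) => [->|_]; rewrite ?mulr1n ?mul1r 1?eq_sym ?mulr0n ?mul0r.
Qed.

Lemma Dmx_mul_mxmon d d2 (j : int) (f : Mon d -> Mon d2 -> F) :
  Dmx F d j *m mxmon f = mxmon (fun a c => ((deg a)%:Z == j)%:R * f a c).
Proof.
rewrite Dmx_mxmon mulmx_mxmon; apply: eq_mxmon => a c.
by rewrite (@sum_indicator1 _ _ a (fun p => ((deg a)%:Z == j)%:R * f p c))
  // => p; rewrite eq_sym mulrA.
Qed.

Lemma mxmon_mul_Dmx d1 d (j : int) (f : Mon d1 -> Mon d -> F) :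
  mxmon f *m Dmx F d j = mxmon (fun a c => f a c * ((deg c)%:Z == j)%:R).
Proof.
rewrite Dmx_mxmon mulmx_mxmon; apply: eq_mxmon => a c.
by rewrite (@sum_indicator1 _ _ c (fun p => f a p * ((deg p)%:Z == j)%:R))
  // => p; rewrite mulrCA.
Qed.

Lemma Dmx_neg d (j : int) : j < 0 -> Dmx F d j = 0.
Proof.
move=> j_lt0; apply/matrixP=> i l; rewrite Dmx_mxmon !mxE.
suff -> : ((deg (mon i))%:Z == j) = false by rewrite mulr0.
by apply/eqP=> deg_j; move: j_lt0; rewrite -deg_j.
Qed.

Lemma PmxM d s u : Pmx F d s *m Pmx F d u = Pmx F d (s * u)%g.
Proof.
rewrite !Pmx_mxmon mulmx_mxmon; apply: eq_mxmon => a c.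
by rewrite -actM (@sum_indicator1 _ _ (act a s) (fun p => (c == act p u)%:R)).
Qed.

Lemma Dmx_Pmx d j s : Dmx F d j *m Pmx F d s = Pmx F d s *m Dmx F d j.
Proof.
rewrite Pmx_mxmon Dmx_mul_mxmon mxmon_mul_Dmx; apply: eq_mxmon => a c.
by rewrite mulrC; case: eqP => [->|_]; rewrite ?deg_act ?mul0r.
Qed.

Lemma mulmx_PmxE d r (Y : 'M[F]_(r, N d)) s i c :
  (Y *m Pmx F d s) i (mon_rank c) = Y i (mon_rank (act c (s^-1)%g)).
Proof.
rewrite Pmx_mxmon mulmx_mxmonE mon_rankK.
by rewrite (@sum_indicator1 _ _ (act c (s^-1)%g) (fun p => Y i (mon_rank p)))
  // => p; rewrite act_eqV mulrC.
Qed.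

Lemma sub_isotypicP d r (Y : 'M[F]_(r, N d)) chi :
  reflect (forall s, Y *m Pmx F d s = chi s *: Y) (Y <= isotypic d chi)%MS.
Proof.
apply: (iffP sub_bigcapmxP) => [Y_iso s | Y_eig s _].
  move/sub_kermxP/eqP: (Y_iso s isT).
  by rewrite mulmxBr mul_mx_scalar subr_eq0 => /eqP.
by apply/sub_kermxP; rewrite mulmxBr Y_eig mul_mx_scalar subrr.
Qed.

End MonomialMatrices.

(** * The sl2-triple on A(d) *)

Section Sl2Triple.
Variables (F : fieldType) (n : nat).
Local Notation Mon := (Mon n.+1).
Implicit Types (a b c p : Mon) (k t : 'I_3).

Lemma eq_monE a b : (a == b) = [forall t, (a t : nat) == b t].
Proof.
apply/eqP/forallP=> [-> t //|ab]; apply/ffunP=> t; apply/val_inj/eqP; exact: ab.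
Qed.

(* Off the boundary ([0 < a k], resp. [a k < n]) these move the exponent of
   [x_k] by one; the junk values at the boundary are masked by the vanishing
   coefficient in [Ef] and by the guard in [Lf]. *)
Definition lower a k : Mon := [ffun t => if t == k then inord (a t).-1 else a t].
Definition raise a k : Mon := [ffun t => if t == k then inord (a t).+1 else a t].

Lemma lowerE a k t : (lower a k t : nat) = if t == k then (a t).-1 else a t.
Proof.
rewrite ffunE; case: eqP => _ //; rewrite inordK //.
by have := ltn_ord (a t); lia.
Qed.

Lemma raiseE a k t :
  (a k < n)%N -> (raise a k t : nat) = if t == k then (a t).+1 else a t.
Proof. by move=> ak; rewrite ffunE; case: eqP => [->|_] //; rewrite inordK. Qed.

Lemma deg_lower a k : (0 < a k)%N -> (deg (lower a k)).+1 = deg a.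
Proof.
move=> ak; rewrite /deg (bigD1 k) //= [in RHS](bigD1 k) //= lowerE eqxx.
rewrite (eq_bigr (fun t => (a t : nat))); first by lia.
by move=> t /negbTE tk; rewrite lowerE tk.
Qed.

Lemma deg_raise a k : (a k < n)%N -> deg (raise a k) = (deg a).+1.
Proof.
move=> ak; rewrite /deg (bigD1 k) //= [in RHS](bigD1 k) //= raiseE // eqxx.
rewrite (eq_bigr (fun t => (a t : nat))); first by lia.
by move=> t /negbTE tk; rewrite raiseE // tk.
Qed.

Lemma lower_raiseC a k k' : k != k' -> (a k < n)%N ->
  lower (raise a k) k' = raise (lower a k') k.
Proof.
move=> kk' ak; have ak' : (lower a k' k < n)%N by rewrite lowerE (negbTE kk').
apply/eqP; rewrite eq_monE; apply/forallP=> t.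
rewrite lowerE !raiseE // !lowerE.
by case: (t =P k) => [->|_]; [rewrite (negbTE kk') | case: (t =P k')].
Qed.

Lemma raiseK a k : (a k < n)%N -> lower (raise a k) k = a.
Proof.
move=> ak; apply/eqP; rewrite eq_monE; apply/forallP=> t.
by rewrite lowerE !raiseE //; case: (t =P k) => [->|].
Qed.

Lemma lowerK a k : (0 < a k)%N -> raise (lower a k) k = a.
Proof.
move=> ak; have ak' : (lower a k k < n)%N.
  by rewrite lowerE eqxx; have := ltn_ord (a k); lia.
apply/eqP; rewrite eq_monE; apply/forallP=> t.
by rewrite raiseE // !lowerE; case: (t =P k) => [->|] //; lia.
Qed.

Lemma lower_act a s k : lower (act a s) (s k) = act (lower a k) s.
Proof.
apply/ffunP=> t; rewrite !ffunE (canF_eq (permKV s)).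
by case: eqP => _ //; rewrite ffunE.
Qed.

Lemma raise_act a s k : raise (act a s) (s k) = act (raise a k) s.
Proof.
apply/ffunP=> t; rewrite !ffunE (canF_eq (permKV s)).
by case: eqP => _ //; rewrite ffunE.
Qed.

Definition Ecoef a k : F := (a k * (n.+1 - a k))%N%:R.
Definition Ef a b : F := \sum_k (b == lower a k)%:R * Ecoef a k.
Definition Lf a b : F := \sum_k ((a k < n)%N && (b == raise a k))%:R.
Definition Hf a b : F := (a == b)%:R * \sum_k (n%:R - (2 * a k)%N%:R).

Definition Lmx : 'M[F]_(N n.+1) := mxmon Lf.
Definition Hmx : 'M[F]_(N n.+1) := mxmon Hf.

Lemma Emx_mxmon : Emx F n.+1 = mxmon Ef.
Proof.
apply/matrixP=> i l; rewrite !mxE; apply: eq_bigr => k _.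
rewrite /Ecoef; case: (posnP (mon i k)) => [->|ak]; first by rewrite mul0n mulr0.
rewrite eq_monE (eq_forallb (fun t => congr1 _ (lowerE _ _ t))).
by case: [forall t, _]; rewrite ?mul1r ?mul0r.
Qed.

Lemma sum_Lf_Ef a c :
  \sum_p Lf a p * Ef p c = \sum_k (a k < n)%N%:R * Ef (raise a k) c.
Proof.
rewrite /Lf; under eq_bigr do rewrite big_distrl /=.
rewrite exchange_big /=; apply: eq_bigr => k _.
by rewrite (@sum_indicator _ _ (raise a k) (a k < n)%N (fun p => Ef p c)).
Qed.

Lemma sum_Ef_Lf a c : \sum_p Ef a p * Lf p c = \sum_k Ecoef a k * Lf (lower a k) c.
Proof.
rewrite /Ef; under eq_bigr do rewrite big_distrl /=.
rewrite exchange_big /=; apply: eq_bigr => k _.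
by rewrite (@sum_indicator1 _ _ (lower a k) (fun p => Ecoef a k * Lf p c))
  // => p; rewrite mulrA.
Qed.

(* The diagonal part of the commutator on [x^a] in direction [k] is
   [(a_k+1)(n-a_k) - a_k(n+1-a_k) = n - 2 a_k]; the first term is absent when
   [a_k = n] and the second vanishes when [a_k = 0]. *)
Lemma LE_EL_diag a c k :
  (a k < n)%N%:R * ((c == lower (raise a k) k)%:R * Ecoef (raise a k) k) =
  Ecoef a k * ((lower a k k < n)%N && (c == raise (lower a k) k))%:R +
  (a == c)%:R * (n%:R - (2 * a k)%N%:R).
Proof.
have ak_le : (a k <= n)%N by have := ltn_ord (a k); lia.
have LE_diag : ((a k < n)%N%:R * ((c == lower (raise a k) k)%:R *
    Ecoef (raise a k) k) = ((c == a) * ((a k < n) * ((a k).+1 * (n - a k))))%N%:R :> F).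
  case: (ltnP (a k) n) => akn /=; last by rewrite mul0n muln0 mul0r.
  by rewrite raiseK // /Ecoef raiseE // eqxx subSS mul1r mul1n [RHS]natrM.
have EL_diag : Ecoef a k * ((lower a k k < n)%N && (c == raise (lower a k) k))%:R
    = ((c == a) * (a k * (n.+1 - a k)))%N%:R :> F.
  case: (posnP (a k)) => [ak0|ak]; first by rewrite /Ecoef ak0 !mul0n muln0 mul0r.
  rewrite lowerK // lowerE eqxx /Ecoef; have -> /= : ((a k).-1 < n)%N by lia.
  by rewrite [RHS]natrM mulrC.
rewrite LE_diag EL_diag (eq_sym a c).
case: (c =P a) => _; last by rewrite !mul0n mul0r addr0.
rewrite !mul1n mul1r; apply: (addIr (2 * a k)%N%:R); rewrite -addrA subrK -!natrD.
by congr _%:R; case: ltnP => akn /=; nia.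
Qed.

Lemma LE_EL_offdiag a c k k' : k' != k ->
  (a k < n)%N%:R * ((c == lower (raise a k) k')%:R * Ecoef (raise a k) k') =
  Ecoef a k' * ((lower a k' k < n)%N && (c == raise (lower a k') k))%:R.
Proof.
move=> k'k; have kk' : k != k' by rewrite eq_sym.
rewrite lowerE (negbTE kk'); case: ltnP => akn /=; last by rewrite !mul0r mulr0.
by rewrite lower_raiseC // mul1r mulrC /Ecoef raiseE // (negbTE k'k).
Qed.

Lemma sum_Lf_Ef_comm a c :
  \sum_p Lf a p * Ef p c = \sum_p Ef a p * Lf p c + Hf a c.
Proof.
rewrite sum_Lf_Ef sum_Ef_Lf /Hf big_distrr /Ef /Lf /=.
under eq_bigr do rewrite big_distrr /=.
under [X in X + _]eq_bigr do rewrite big_distrr /=.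
rewrite [X in X + _]exchange_big /= -big_split /=; apply: eq_bigr => k _.
rewrite [LHS](bigD1 k) //= [in RHS](bigD1 k) //= -addrA [_ + (_ * _)]addrC addrA.
rewrite LE_EL_diag -!addrA; congr (_ + (_ + _)).
by apply: eq_bigr => k' k'k; rewrite LE_EL_offdiag.
Qed.

Lemma Lmx_Emx : Lmx *m Emx F n.+1 = Emx F n.+1 *m Lmx + Hmx.
Proof.
rewrite Emx_mxmon !mulmx_mxmon addmx_mxmon.
by apply: eq_mxmon => a c; apply: sum_Lf_Ef_comm.
Qed.
End Sl2Triple.

Section Sl2Grading.
Variables (F : fieldType) (n : nat).
Local Notation D := (Dmx F n.+1).
Local Notation E := (Emx F n.+1).
Local Notation L := (Lmx F n).

Lemma Dmx_Emx i : D i *m E = E *m D (i - 1).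
Proof.
rewrite Emx_mxmon Dmx_mul_mxmon mxmon_mul_Dmx; apply: eq_mxmon => a c.
rewrite /Ef big_distrr big_distrl /=; apply: eq_bigr => k _.
case: (c =P lower a k) => [->|]; last by rewrite !mul0r mulr0.
case: (posnP (a k)) => [ak0|ak]; first by rewrite /Ecoef ak0 mul0n !mulr0 mul0r.
rewrite -(deg_lower ak) -addn1 PoszD mulrC.
by rewrite (can2_eq (addrK 1) (subrK 1)).
Qed.

Lemma Dmx_Lmx i : D i *m L = L *m D (i + 1).
Proof.
rewrite Dmx_mul_mxmon mxmon_mul_Dmx; apply: eq_mxmon => a c.
rewrite /Lf big_distrr big_distrl /=; apply: eq_bigr => k _.
case: ltnP => akn /=; last by rewrite !mul0r mulr0.
case: (c =P raise a k) => [->|]; last by rewrite !mulr0 mul0r.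
by rewrite deg_raise // -[(deg a).+1]addn1 PoszD (inj_eq (addIr 1)) mulrC.
Qed.

Lemma Dmx_Hmx (i : nat) : D i *m Hmx F n = ((3 * n)%:R - (2 * i)%:R)%:M *m D i.
Proof.
rewrite /Hmx Dmx_mul_mxmon scalar_mxmon mxmon_mul_Dmx.
apply: eq_mxmon => a c; rewrite /Hf.
case: (a =P c) => [<-|]; last by rewrite !mul0r mulr0.
rewrite !mul1r mulrC sumrB sumr_const card_ord -natr_sum -big_distrr /= -/(deg a).
by case: eqP => [[->]|_] /=; rewrite ?mulr0 // [(3 * n)%:R]natrM mulr_natl.
Qed.

Lemma Dmx_LE (i : nat) : (2 * i <= 3 * n)%N ->
  D i *m (L *m E) = (E *m L + (3 * n - 2 * i)%N%:R%:M) *m D i.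
Proof.
move=> i_le; rewrite Lmx_Emx mulmxDr mulmxDl Dmx_Hmx natrB //; congr (_ + _).
by rewrite mulmxA Dmx_Emx -mulmxA Dmx_Lmx subrK mulmxA.
Qed.

Lemma Pmx_Emx s : Pmx F n.+1 s *m E = E *m Pmx F n.+1 s.
Proof.
rewrite Pmx_mxmon Emx_mxmon !mulmx_mxmon; apply: eq_mxmon => a c.
rewrite (@sum_indicator1 _ _ (act a s) (fun p => Ef F p c)) // /Ef.
under [RHS]eq_bigr do rewrite big_distrl /=.
rewrite exchange_big /= (reindex_inj (@perm_inj _ s)) /=; apply: eq_bigr => k _.
rewrite (@sum_indicator1 _ _ (lower a k) (fun p => (c == act p s)%:R * Ecoef F a k))
  => [|p]; last by rewrite mulrAC -mulrA.
by rewrite lower_act /Ecoef act_perm.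
Qed.

Lemma Pmx_Lmx s : Pmx F n.+1 s *m L = L *m Pmx F n.+1 s.
Proof.
rewrite Pmx_mxmon !mulmx_mxmon; apply: eq_mxmon => a c.
rewrite (@sum_indicator1 _ _ (act a s) (fun p => Lf F p c)) // /Lf.
under [RHS]eq_bigr do rewrite big_distrl /=.
rewrite exchange_big /= (reindex_inj (@perm_inj _ s)) /=; apply: eq_bigr => k _.
rewrite (@sum_indicator _ _ (raise a k) (a k < n)%N (fun p => (c == act p s)%:R)) //.
by rewrite raise_act act_perm; case: ltnP; rewrite ?mul1r ?mul0r.
Qed.

Lemma rank_KerEj_isotypic (chi : 'S_3 -> F) (j : nat) :
  [pchar F] =i pred0 -> (j <= (3 * n) %/ 2)%N ->
  \rank (KerEj F n.+1 j :&: isotypic n.+1 chi)%MS =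
  (\rank (D j :&: isotypic n.+1 chi)%MS
   - \rank (D (j%:Z - 1) :&: isotypic n.+1 chi)%MS)%N.
Proof.
move=> F_pchar0 j_le.
apply: (@rank_graded_kerE _ _ E L D _ (fun s => Pmx F n.+1 s - (chi s)%:M)
          (fun i => 3 * n - 2 * i)%N) => //.
- exact: Dmx_Emx.
- exact: Dmx_Lmx.
- by rewrite Dmx_neg.
- by move=> i i_lt; apply: Dmx_LE; lia.
- by move=> i i_lt /=; lia.
- by move=> s; rewrite mulmxBl mulmxBr Pmx_Emx scalar_mxC.
- by move=> s; rewrite mulmxBl mulmxBr Pmx_Lmx scalar_mxC.
Qed.
End Sl2Grading.

(** * Sorted exponent vectors *)

Definition o0 : 'I_3 := @Ordinal 3 0 isT.
Definition o1 : 'I_3 := @Ordinal 3 1 isT.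
Definition o2 : 'I_3 := @Ordinal 3 2 isT.

Lemma ord3P (t : 'I_3) : [\/ t = o0, t = o1 | t = o2].
Proof.
by case: t => [[|[|[|m]]] lt_m3] //; [apply: Or31 | apply: Or32 | apply: Or33];
  apply: val_inj.
Qed.

Section SortedMonomials.
Variable d : nat.
Implicit Types (x y : Mon d) (s : 'S_3).

Definition weakly_decr x := (x o1 <= x o0)%N && (x o2 <= x o1)%N.
Definition strictly_decr x := (x o1 < x o0)%N && (x o2 < x o1)%N.

Lemma deg3 x : deg x = (x o0 + x o1 + x o2)%N.
Proof.
by rewrite /deg !big_ord_recl big_ord0 addn0 addnA; congr (_ + _ + _);
  congr (x _); apply: val_inj.
Qed.

Lemma strictly_decr_inj x u v : strictly_decr x -> x u = x v -> u = v.
Proof.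
case/andP=> x01 x12 /(congr1 val) /=.
by case: (ord3P u) => ->; case: (ord3P v) => -> //; lia.
Qed.

(* A weakly decreasing rearrangement is unique: its extreme entries are the
   maximum and minimum of [x], and the middle one is fixed by the degree. *)
Lemma weakly_decr_act x s : weakly_decr x -> weakly_decr (act x s) -> act x s = x.
Proof.
have bounds y t : weakly_decr y -> (y o2 <= y t <= y o0)%N.
  by case/andP; case: (ord3P t) => ->; lia.
move=> x_dec y_dec; have := deg_act x s; rewrite !deg3.
have := bounds _ (s o0) y_dec; have := bounds _ (s o2) y_dec.
have := bounds _ ((s^-1)%g o0) x_dec; have := bounds _ ((s^-1)%g o2) x_dec.
rewrite !act_perm -!actE; move: (act x s) => y.
move=> /andP[x2_y2 _] /andP[_ y0_x0] /andP[y2_x2 _] /andP[_ x0_y0] deg_eq.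
have y0 : y o0 = x o0 :> nat by apply/eqP; rewrite eqn_leq y0_x0 x0_y0.
have y2 : y o2 = x o2 :> nat by apply/eqP; rewrite eqn_leq y2_x2 x2_y2.
have y1 : y o1 = x o1 :> nat.
  by move: deg_eq; rewrite y0 y2 => /eqP; rewrite eqn_add2r eqn_add2l => /eqP.
by apply/ffunP=> t; apply: ord_inj; case: (ord3P t) => ->.
Qed.

Lemma strictly_decr_weakly x : strictly_decr x -> weakly_decr x.
Proof. by case/andP=> x01 x12; rewrite /weakly_decr (ltnW x01) (ltnW x12). Qed.

Lemma strictly_decr_act x s :
  strictly_decr x -> strictly_decr (act x s) -> s = 1%g.
Proof.
move=> x_dec xs_dec.
have xs_x := weakly_decr_act (strictly_decr_weakly x_dec) (strictly_decr_weakly xs_dec).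
apply/permP=> t; rewrite perm1; apply: (strictly_decr_inj x_dec).
by rewrite -{1}xs_x act_perm.
Qed.

Lemma exists_weakly_decr_act x : exists s, weakly_decr (act x s).
Proof.
suff [s s_dec] : exists s : 'S_3,
    (x (s o1) <= x (s o0))%N && (x (s o2) <= x (s o1))%N.
  by exists s^-1%g; rewrite /weakly_decr !actE invgK.
case: (leqP (x o1) (x o0)) => x01; case: (leqP (x o2) (x o1)) => x12;
  case: (leqP (x o2) (x o0)) => x02.
- by exists 1%g; rewrite !perm1 x01 x12.
- by exists 1%g; rewrite !perm1 x01 x12.
- by exists (tperm o1 o2); rewrite !permE /=; lia.
- by exists (tperm o0 o1 * tperm o1 o2)%g; rewrite !permM !permE /=; lia.
- by exists (tperm o0 o1); rewrite !permE /=; lia.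
- by exists (tperm o1 o2 * tperm o0 o1)%g; rewrite !permM !permE /=; lia.
- by exists 1%g; lia.
- by exists (tperm o0 o2); rewrite !permE /=; lia.
Qed.

Lemma weakly_decr_odd_fixed y : weakly_decr y -> ~~ strictly_decr y ->
  exists2 t : 'S_3, odd_perm t & act y t = y.
Proof.
have fixed u v : y u = y v -> act y (tperm u v) = y.
  move=> yuv; apply/ffunP=> t; rewrite actE tpermV.
  by case: tpermP => [->|->|] //; rewrite yuv.
case/andP=> y01 y12; rewrite /strictly_decr !ltn_neqAle y01 y12 !andbT negb_and !negbK.
case/orP=> /eqP/ord_inj yE; [exists (tperm o0 o1) | exists (tperm o1 o2)];
  by rewrite ?odd_tperm ?fixed.
Qed.

End SortedMonomials.

Section StaircaseShift.
Variable n : nat.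

(* [x^b |-> x^b x_1^2 x_2], the bijection between weakly decreasing exponents
   in [A(n+1)] and strictly decreasing ones in [A(n+3)]. *)
Definition shift_mon (b : Mon n.+1) : Mon n.+3 := [ffun t => inord (b t + (2 - t))].

Lemma shift_monE b t : (shift_mon b t : nat) = (b t + (2 - t))%N.
Proof. by rewrite ffunE inordK //; have := ltn_ord (b t); have := ltn_ord t; lia. Qed.

Lemma strictly_decr_shift b : weakly_decr b -> strictly_decr (shift_mon b).
Proof. by case/andP=> b01 b12; rewrite /strictly_decr !shift_monE /=; lia. Qed.

Lemma shift_mon_inj : injective shift_mon.
Proof.
move=> b b' /ffunP bb'; apply/ffunP=> t; apply: ord_inj.
by have := congr1 val (bb' t); rewrite /= !shift_monE; lia.
Qed.

Lemma deg_shift_mon b : deg (shift_mon b) = (deg b + 3)%N.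
Proof. by rewrite !deg3 !shift_monE /=; lia. Qed.

Lemma strictly_decr_shiftP a :
  strictly_decr a -> exists2 b, weakly_decr b & a = shift_mon b.
Proof.
case/andP=> a01 a12.
have a_lt t : (a t - (2 - t) < n.+1)%N.
  by have := ltn_ord (a o0); case: (ord3P t) => -> /=; lia.
pose b : Mon n.+1 := [ffun t => Ordinal (a_lt t)].
exists b; first by rewrite /weakly_decr !ffunE /=; lia.
apply/ffunP=> t; apply: ord_inj; rewrite shift_monE ffunE /=.
by case: (ord3P t) => -> /=; lia.
Qed.

End StaircaseShift.

(** * Sign-isotypic versus invariant vectors *)

Section Symmetrizers.
Variable F : fieldType.
Implicit Types (s u : 'S_3).

Lemma sgnFM s u : sgnF F (s * u)%g = sgnF F s * sgnF F u.
Proof. by rewrite /sgnF odd_permM signr_addb. Qed.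

Lemma sgnFV s : sgnF F (s^-1)%g = sgnF F s.
Proof. by rewrite /sgnF odd_permV. Qed.

Lemma sgnF_neq0 s : sgnF F s != 0.
Proof. by rewrite signr_eq0. Qed.

Definition symmetrizer d : 'M[F]_(N d) := \sum_s Pmx F d s.
Definition antisymmetrizer d : 'M[F]_(N d) := \sum_s sgnF F s *: Pmx F d s.

Lemma symmetrizer_Pmx d u : symmetrizer d *m Pmx F d u = symmetrizer d.
Proof.
rewrite /symmetrizer mulmx_suml; under eq_bigr do rewrite PmxM.
by rewrite [RHS](reindex_inj (mulIg u)).
Qed.

Lemma antisymmetrizer_Pmx d u :
  antisymmetrizer d *m Pmx F d u = sgnF F u *: antisymmetrizer d.
Proof.
rewrite /antisymmetrizer mulmx_suml scaler_sumr.
under eq_bigr do rewrite -scalemxAl PmxM.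
rewrite [RHS](reindex_inj (mulIg u)) /=; apply: eq_bigr => s _.
by rewrite scalerA sgnFM mulrCA /sgnF -signr_addb addbb mulr1.
Qed.

Lemma Dmx_symmetrizer d j : Dmx F d j *m symmetrizer d = symmetrizer d *m Dmx F d j.
Proof.
by rewrite mulmx_sumr mulmx_suml; apply: eq_bigr => s _; apply: Dmx_Pmx.
Qed.

Lemma Dmx_antisymmetrizer d j :
  Dmx F d j *m antisymmetrizer d = antisymmetrizer d *m Dmx F d j.
Proof.
rewrite mulmx_sumr mulmx_suml; apply: eq_bigr => s _.
by rewrite -scalemxAr -scalemxAl Dmx_Pmx.
Qed.

Lemma mulmx_symmetrizerE d r (Y : 'M[F]_(r, N d)) i c :
  (Y *m symmetrizer d) i (mon_rank c) = \sum_s Y i (mon_rank (act c s)).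
Proof.
rewrite mulmx_sumr summxE; under eq_bigr do rewrite mulmx_PmxE.
by rewrite (reindex_inj invg_inj); apply: eq_bigr => s _; rewrite invgK.
Qed.

Lemma mulmx_antisymmetrizerE d r (Y : 'M[F]_(r, N d)) i c :
  (Y *m antisymmetrizer d) i (mon_rank c) =
  \sum_s sgnF F s * Y i (mon_rank (act c s)).
Proof.
rewrite mulmx_sumr summxE; under eq_bigr do rewrite -scalemxAr mxE mulmx_PmxE.
by rewrite (reindex_inj invg_inj); apply: eq_bigr => s _; rewrite invgK sgnFV.
Qed.

Lemma isotypic_entry d r (X : 'M[F]_(r, N d)) chi i c s :
  (X <= isotypic d chi)%MS ->
  X i (mon_rank (act c s)) = chi (s^-1)%g * X i (mon_rank c).
Proof.
move/sub_isotypicP/(_ (s^-1)%g) => XP.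
have := congr1 (fun Y : 'M_(r, N d) => Y i (mon_rank c)) XP.
by rewrite /= mulmx_PmxE invgK mxE.
Qed.

End Symmetrizers.

Section SignTrivial.
Variables (F : fieldType) (n : nat).
Hypothesis F_pchar0 : [pchar F] =i pred0.
Local Notation sgn := (sgnF F).
Local Notation one := (fun _ : 'S_3 => 1 : F).

Definition shift_mx : 'M[F]_(N n.+1, N n.+3) :=
  mxmon (fun b a => (weakly_decr b && (a == shift_mon b))%:R).
Definition unshift_mx : 'M[F]_(N n.+3, N n.+1) :=
  mxmon (fun a b => (weakly_decr b && (a == shift_mon b))%:R).

Definition sign_to_triv := unshift_mx *m symmetrizer F n.+1.
Definition triv_to_sign := shift_mx *m antisymmetrizer F n.+3.

Lemma mulmx_unshiftE r (X : 'M[F]_(r, N n.+3)) i b :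
  (X *m unshift_mx) i (mon_rank b) = (weakly_decr b)%:R * X i (mon_rank (shift_mon b)).
Proof.
rewrite mulmx_mxmonE mon_rankK.
rewrite (@sum_indicator _ _ (shift_mon b) (weakly_decr b) (fun a => X i (mon_rank a)))
  // => a; exact: mulrC.
Qed.

Lemma mulmx_shiftE r (X : 'M[F]_(r, N n.+1)) i a :
  (X *m shift_mx) i (mon_rank a) =
  \sum_b (weakly_decr b && (a == shift_mon b))%:R * X i (mon_rank b).
Proof. by rewrite mulmx_mxmonE mon_rankK; apply: eq_bigr => b _; rewrite mulrC. Qed.

Lemma deg_shift_monE (j : int) (b : Mon n.+1) :
  ((deg (shift_mon b))%:Z == j) = ((deg b)%:Z == j - 3).
Proof. by rewrite deg_shift_mon PoszD (can2_eq (addrK 3) (subrK 3)). Qed.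

Lemma Dmx_sign_to_triv j :
  Dmx F n.+3 j *m sign_to_triv = sign_to_triv *m Dmx F n.+1 (j - 3).
Proof.
rewrite /sign_to_triv mulmxA Dmx_mul_mxmon -mulmxA -Dmx_symmetrizer mulmxA.
rewrite mxmon_mul_Dmx; congr (_ *m _); apply: eq_mxmon => a b.
case: (a =P shift_mon b) => [->|_]; last by rewrite andbF /= mulr0 mul0r.
by rewrite andbT deg_shift_monE mulrC.
Qed.

Lemma Dmx_triv_to_sign j :
  Dmx F n.+1 (j - 3) *m triv_to_sign = triv_to_sign *m Dmx F n.+3 j.
Proof.
rewrite /triv_to_sign mulmxA Dmx_mul_mxmon -mulmxA -Dmx_antisymmetrizer mulmxA.
rewrite mxmon_mul_Dmx; congr (_ *m _); apply: eq_mxmon => b a.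
case: (a =P shift_mon b) => [->|_]; last by rewrite andbF /= mulr0 mul0r.
by rewrite andbT deg_shift_monE mulrC.
Qed.

Local Notation U j := (Dmx F n.+3 j :&: isotypic n.+3 sgn)%MS.
Local Notation W j := (Dmx F n.+1 (j - 3) :&: isotypic n.+1 one)%MS.

Lemma sign_to_triv_sub j : (U j *m sign_to_triv <= W j)%MS.
Proof.
rewrite sub_capmx (submx_mul_intertwine (capmxSl _ _) (Dmx_sign_to_triv j)).
by apply/sub_isotypicP=> s; rewrite -!mulmxA symmetrizer_Pmx scale1r.
Qed.

Lemma triv_to_sign_sub j : (W j *m triv_to_sign <= U j)%MS.
Proof.
rewrite sub_capmx (submx_mul_intertwine (capmxSl _ _) (Dmx_triv_to_sign j)).
by apply/sub_isotypicP=> s; rewrite -!mulmxA antisymmetrizer_Pmx -!scalemxAr.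
Qed.

(* On weakly decreasing [b] the symmetrization sums [|Stab(b)|] equal copies
   of [X_(b + (2,1,0))]; a sign-isotypic vector is determined by these values
   since it vanishes on monomials fixed by a transposition. *)
Lemma sign_to_triv_inj r (X : 'M[F]_(r, N n.+3)) :
  (X <= isotypic n.+3 sgn)%MS -> X *m sign_to_triv = 0 -> X = 0.
Proof.
move=> X_sgn X_ker; apply: matrix_mon_rankP => i a; rewrite mxE.
have X_shift b : weakly_decr b -> X i (mon_rank (shift_mon b)) = 0.
  move=> b_dec; have : (X *m sign_to_triv) i (mon_rank b) = 0 by rewrite X_ker mxE.
  rewrite /sign_to_triv mulmxA mulmx_symmetrizerE.
  under eq_bigr => s _ do rewrite mulmx_unshiftE.
  have stab s : (weakly_decr (act b s))%:R * X i (mon_rank (shift_mon (act b s))) =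
      (weakly_decr (act b s))%:R * X i (mon_rank (shift_mon b)).
    by case: (boolP (weakly_decr _)) => [/(weakly_decr_act b_dec)->|]; rewrite ?mul0r.
  under eq_bigr => s _ do rewrite stab.
  rewrite -mulr_suml -natr_sum => /eqP; rewrite mulf_eq0 => /orP[|/eqP //].
  by rewrite (bigD1 1%g) //= act1 b_dec (negbTE (pchar0_natr_neq0 F_pchar0 _)).
have [s as_dec] := exists_weakly_decr_act a.
suff : X i (mon_rank (act a s)) = 0.
  rewrite (isotypic_entry _ _ _ X_sgn) => /eqP.
  by rewrite mulf_eq0 (negbTE (sgnF_neq0 _ _)) => /eqP.
have [as_sdec | as_nsdec] := boolP (strictly_decr (act a s)).
  by have [b b_dec ->] := strictly_decr_shiftP as_sdec; apply: X_shift.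
have [t t_odd as_t] := weakly_decr_odd_fixed as_dec as_nsdec.
have := isotypic_entry i (act a s) t X_sgn; rewrite as_t sgnFV /sgnF t_odd expr1.
move/eqP; rewrite mulN1r -subr_eq0 opprK -mulr2n -mulr_natr mulf_eq0.
by rewrite (negbTE (pchar0_natr_neq0 _ _)) // orbF => /eqP.
Qed.

(* The antisymmetrization of [x^(b + (2,1,0))] only meets [x^(b + (2,1,0))]
   itself among the shifted monomials, as strictly decreasing exponents have
   trivial stabilizer. *)
Lemma triv_to_sign_inj r (X : 'M[F]_(r, N n.+1)) :
  (X <= isotypic n.+1 one)%MS -> X *m triv_to_sign = 0 -> X = 0.
Proof.
move=> X_one X_ker; apply: matrix_mon_rankP => i c; rewrite mxE.
have X_dec b : weakly_decr b -> X i (mon_rank b) = 0.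
  move=> b_dec.
  have : (X *m triv_to_sign) i (mon_rank (shift_mon b)) = 0 by rewrite X_ker mxE.
  rewrite /triv_to_sign mulmxA mulmx_antisymmetrizerE (bigD1 1%g) //=.
  rewrite big1 ?addr0 => [|s s_neq1]; last first.
    rewrite mulmx_shiftE big1 ?mulr0 // => b' _.
    case: (boolP (weakly_decr b' && _)) => [/andP[b'_dec /eqP sb_b']|];
      last by rewrite mul0r.
    case/eqP: s_neq1; apply: (strictly_decr_act (strictly_decr_shift b_dec)).
    by rewrite sb_b' strictly_decr_shift.
  rewrite act1 mulmx_shiftE /sgnF odd_perm1 mul1r.
  rewrite (@sum_indicator _ _ b (weakly_decr b) (fun b' => X i (mon_rank b'))).
    by rewrite b_dec mul1r.
  move=> b'; rewrite (inj_eq (@shift_mon_inj n)) eq_sym.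
  by case: eqP => [->|]; rewrite ?andbT ?andbF.
have [s cs_dec] := exists_weakly_decr_act c.
by have := isotypic_entry i c s X_one; rewrite mul1r X_dec.
Qed.

Lemma rank_sign_triv j : \rank (U j) = \rank (W j).
Proof.
apply/eqP; rewrite eqn_leq.
rewrite (mxrank_leq_inj (sign_to_triv_sub j)) => [|r X /submx_trans X_U]; last first.
  exact/sign_to_triv_inj/X_U/capmxSr.
rewrite (mxrank_leq_inj (triv_to_sign_sub j)) => // r X /submx_trans X_W.
exact/triv_to_sign_inj/X_W/capmxSr.
Qed.

End SignTrivial.

Theorem proposition4p1 (F : closedFieldType) (HF : [pchar F]%R =i pred0)
  (d j : nat) :
  (3 <= d)%N -> (j <= (3 * (d - 1)) %/ 2)%N ->
  sign F d (Posz j) = triv F (d - 2) (Posz j - 3)%R.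
Proof.
case: d => [|[|[|n]]] // _ j_le.
rewrite /sign /triv (rank_KerEj_isotypic _ HF) // !(rank_sign_triv _ HF).
have [j_ge3 | j_lt3] := leqP 3 j; last first.
  by rewrite /KerEj !Dmx_neg ?cap0mx ?mxrank0 //; lia.
have -> : Posz j - 3 = Posz (j - 3) by lia.
rewrite (rank_KerEj_isotypic _ HF); last by move: j_le; rewrite /=; lia.
by have -> : Posz j - 1 - 3 = Posz (j - 3) - 1 by lia.
Qed.
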